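(* Let $\widetilde C$ be an $\mathcal S$-complex over $R$. For all integers $i,j$ we have an $\mathcal S$-chain homotopy equivalence $\Sigma^i\Sigma^j\widetilde C\simeq\Sigma^{i+j}\widetilde C$.
   Context: Let $R$ be a commutative ring; graded modules are $\mathbb Z$-graded, $V[i]_j=V_{i+j}$, differentials have degree $-1$. An $\mathcal S$-complex over $R$ is a chain complex $(\widetilde C,\widetilde d)$ of finitely generated free graded $R$-modules with a graded decomposition $\widetilde C=C\oplus C[-1]\oplus\mathsf R$ in which $\widetilde d=\begin{pmatrix} d&0&0\\ v&-d&\delta_2\\ \delta_1&0&r\end{pmatrix}$; $\chi$ is the degree $1$ map sending $C$ identically onto $C[-1]$ and zero on $C[-1]\oplus\mathsf R$. A morphism is a degree $0$ chain map commuting with the $\chi$'s; an $\mathcal S$-chain homotopy between morphisms is a degree $1$ map $\widetilde K$ anticommuting with the $\chi$'s ($\chi'\widetilde K+\widetilde K\chi=0$) with $\widetilde d'\widetilde K+\widetilde K\widetilde d$ equal to their difference; $\simeq$ denotes $\mathcal S$-chain homotopy equivalence (a pair of morphisms whose composites are $\mathcal S$-chain homotopic to identities). The suspension $\Sigma\widetilde C$ is $C_\Sigma\oplus C_\Sigma[-1]\oplus\mathsf R$, $C_\Sigma=C[-2]\oplus\mathsf R[-1]$, with differential, in the ordered summands $C[-2],\mathsf R[-1],C[-3],\mathsf R[-2],\mathsf R$, $\begin{pmatrix} d&-\delta_2&0&0&0\\ 0&-r&0&0&0\\ v&0&-d&\delta_2&v\delta_2\\ \delta_1&0&0&r&\delta_1\delta_2\\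 0&1&0&0&r\end{pmatrix}$. The negative suspension $\Sigma^{-1}\widetilde C$ is $C_{\Sigma^{-1}}\oplus C_{\Sigma^{-1}}[-1]\oplus\mathsf R$, $C_{\Sigma^{-1}}=C[2]\oplus\mathsf R[2]$, with differential, in the ordered summands $C[2],\mathsf R[2],C[1],\mathsf R[1],\mathsf R$, $\begin{pmatrix} d&0&0&0&0\\ \delta_1&r&0&0&0\\ v&\delta_2&-d&0&0\\ 0&0&-\delta_1&-r&1\\ \delta_1v&\delta_1\delta_2&0&0&r\end{pmatrix}$. For $n>0$, $\Sigma^n$ is the $n$-fold iterate of $\Sigma$, $\Sigma^{-n}$ is the $n$-fold iterate of $\Sigma^{-1}$, and $\Sigma^0$ is the identity. *)

From HB Require Import structures.
From mathcomp Require Import all_boot all_order all_algebra.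
Unset Printing Implicit Defensive.
Import GRing.Theory Num.Theory.
Local Open Scope ring_scope.

(* A finitely generated free graded R-module is encoded by its rank n and the
   degrees of its basis vectors, deg : 'I_n -> int.  A homogeneous R-linear map
   V -> W is a matrix M : 'M_(rank W, rank V) acting on column vectors
   (f(e_j) = \sum_i M i j e'_i). *)

Definition homog {R : pzRingType} {k l : nat} (p : int)
  (a : 'I_l -> int) (b : 'I_k -> int) (M : 'M[R]_(k, l)) : Prop :=
  forall i j, M i j != 0 -> b i = a j + p.

Definition catdeg {n k : nat} (a : 'I_n -> int) (b : 'I_k -> int) : 'I_(n + k) -> int :=
  fun i => match split i with inl x => a x | inr y => b y end.

(* V[s]_j = V_{s+j}: a generator of degree d of V has degree d - s in V[s] *)
Definition shiftdeg {n : nat} (s : int) (a : 'I_n -> int) : 'I_n -> int :=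
  fun i => a i - s.

(* An S-complex over R, with a fixed graded free module 𝖱 (rank m, degrees rd).
   C has rank dimC and basis degrees cd. *)
Record Scx (R : comPzRingType) (m : nat) (rd : 'I_m -> int) := MkScx {
  dimC : nat;
  cd : 'I_dimC -> int;
  dd : 'M[R]_dimC;
  vv : 'M[R]_dimC;            (* v  : C -> C[-1] *)
  de1 : 'M[R]_(m, dimC);
  de2 : 'M[R]_(dimC, m);      (* δ2 : 𝖱 -> C[-1] *)
  rr : 'M[R]_m
}.

Arguments dimC {R m rd} _.
Arguments cd {R m rd} _ _.
Arguments dd {R m rd} _.
Arguments vv {R m rd} _.
Arguments de1 {R m rd} _.
Arguments de2 {R m rd} _.
Arguments rr {R m rd} _.

Section S.
Context {R : comPzRingType} {m : nat} {rd : 'I_m -> int}.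
Local Notation Sc := (@Scx R m rd).

Definition tdeg (X : Sc) : 'I_(dimC X + dimC X + m) -> int :=
  catdeg (catdeg (cd X) (shiftdeg (-1) (cd X))) rd.

(* the total differential  [[d,0,0],[v,-d,δ2],[δ1,0,r]] *)
Definition tot (X : Sc) : 'M[R]_(dimC X + dimC X + m) :=
  block_mx (block_mx (dd X) 0 (vv X) (- dd X)) (col_mx 0 (de2 X))
           (row_mx (de1 X) 0) (rr X).

Definition chi (X : Sc) : 'M[R]_(dimC X + dimC X + m) :=
  block_mx (block_mx 0 0 1%:M 0) 0 0 0.

Definition is_Scx (X : Sc) : Prop :=
  homog (-1) (tdeg X) (tdeg X) (tot X) /\ tot X *m tot X = 0.

Definition is_Smorph {X Y : Sc} (F : 'M[R]_(dimC Y + dimC Y + m, dimC X + dimC X + m)) : Prop :=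
  [/\ homog 0 (tdeg X) (tdeg Y) F, F *m tot X = tot Y *m F & F *m chi X = chi Y *m F].

Definition Shomotopic {X Y : Sc} (F G : 'M[R]_(dimC Y + dimC Y + m, dimC X + dimC X + m)) : Prop :=
  exists K : 'M[R]_(dimC Y + dimC Y + m, dimC X + dimC X + m),
    [/\ homog 1 (tdeg X) (tdeg Y) K,
        chi Y *m K + K *m chi X = 0 &
        tot Y *m K + K *m tot X = F - G].

Definition Sequiv (X Y : Sc) : Prop :=
  exists (F : 'M[R]_(dimC Y + dimC Y + m, dimC X + dimC X + m))
         (G : 'M[R]_(dimC X + dimC X + m, dimC Y + dimC Y + m)),
    [/\ is_Smorph F, is_Smorph G,
        Shomotopic (G *m F) 1%:M & Shomotopic (F *m G) 1%:M].

Definition susp (X : Sc) : Sc :=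
  @MkScx R m rd (dimC X + m)
    (catdeg (shiftdeg (-2) (cd X)) (shiftdeg (-1) rd))
    (block_mx (dd X) (- de2 X) 0 (- rr X))
    (block_mx (vv X) 0 (de1 X) 0)
    (row_mx 0 1%:M)
    (col_mx (vv X *m de2 X) (de1 X *m de2 X))
    (rr X).

Definition desusp (X : Sc) : Sc :=
  @MkScx R m rd (dimC X + m)
    (catdeg (shiftdeg 2 (cd X)) (shiftdeg 2 rd))
    (block_mx (dd X) 0 (de1 X) (rr X))
    (block_mx (vv X) (de2 X) 0 0)
    (row_mx (de1 X *m vv X) (de1 X *m de2 X))
    (col_mx 0 1%:M)
    (rr X).

Definition suspn (z : int) (X : Sc) : Sc :=
  match z with
  | Posz k => iter k susp X
  | Negz k => iter k.+1 desusp X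
  end.
End S.

From mathcomp Require Import all_boot all_order all_algebra.
From mathcomp Require Import ring zify.
Import GRing.Theory.
Local Open Scope ring_scope.

(* Σ and Σ^{-1} act blockwise on S-morphisms and on S-chain homotopies.  These actions
   preserve identities, send S-chain homotopic maps to S-chain homotopic maps and respect
   composition up to S-chain homotopy, so Σ and Σ^{-1} preserve ≃.  Explicit maps give
   X ≃ ΣΣ^{-1}X and X ≃ Σ^{-1}ΣX, hence ΣΣ^n X ≃ Σ^{n+1}X and Σ^{-1}Σ^n X ≃ Σ^{n-1}X for
   every integer n, and the corollary follows by induction on i.  Componentwise, every
   matrix identity needed is a linear combination of the relations expressing that the
   total differentials square to zero. *)

Section Homogeneous.
Context {R : comPzRingType}.

Lemma homog0 k l p (a : 'I_l -> int) (b : 'I_k -> int) : homog p a b (0 : 'M[R]_(k, l)).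
Proof. by move=> i j; rewrite mxE eqxx. Qed.

Lemma homog1 k p (a : 'I_k -> int) : p = 0 -> homog p a a (1%:M : 'M[R]_k).
Proof.
move=> -> i j; rewrite mxE addr0.
by case: (eqVneq i j) => [-> | _]; rewrite ?eqxx.
Qed.

Lemma homogD k l p (a : 'I_l -> int) (b : 'I_k -> int) (M N : 'M[R]_(k, l)) :
  homog p a b M -> homog p a b N -> homog p a b (M + N).
Proof.
move=> hM hN i j; rewrite mxE.
by have [-> | /hM //] := eqVneq (M i j) 0; rewrite add0r => /hN.
Qed.

Lemma homogN k l p (a : 'I_l -> int) (b : 'I_k -> int) (M : 'M[R]_(k, l)) :
  homog p a b M -> homog p a b (- M).
Proof. by move=> hM i j; rewrite mxE oppr_eq0 => /hM. Qed.

Lemma homogM k l n p q r (a : 'I_l -> int) (b : 'I_k -> int) (c : 'I_n -> int)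
    (M : 'M[R]_(k, l)) (N : 'M[R]_(n, k)) :
  homog p a b M -> homog q b c N -> r = p + q -> homog r a c (N *m M).
Proof.
move=> hM hN -> i j; rewrite mxE; apply: contraTeq => cij.
rewrite negbK big1 // => x _.
have [-> | /hN ciN] := eqVneq (N i x) 0; first by rewrite mul0r.
have [-> | /hM bxM] := eqVneq (M x j) 0; first by rewrite mulr0.
by move: cij; rewrite ciN bxM addrA eqxx.
Qed.

Lemma split_lshift k n (i : 'I_k) : split (lshift n i) = inl i.
Proof. exact: (unsplitK (inl i)). Qed.

Lemma split_rshift k n (i : 'I_n) : split (rshift k i) = inr i.
Proof. exact: (unsplitK (inr i)). Qed.

Lemma homog_blockP n1 n2 k1 k2 p (a1 : 'I_n1 -> int) (a2 : 'I_n2 -> int)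
    (b1 : 'I_k1 -> int) (b2 : 'I_k2 -> int) (A : 'M[R]_(k1, n1)) B C D :
  homog p (catdeg a1 a2) (catdeg b1 b2) (block_mx A B C D) <->
  [/\ homog p a1 b1 A, homog p a2 b1 B, homog p a1 b2 C & homog p a2 b2 D].
Proof.
rewrite /catdeg; split.
  move=> H; split=> i j.
  - by move: (H (lshift k2 i) (lshift n2 j)); rewrite block_mxEul !split_lshift.
  - by move: (H (lshift k2 i) (rshift n1 j)); rewrite block_mxEur split_lshift split_rshift.
  - by move: (H (rshift k1 i) (lshift n2 j)); rewrite block_mxEdl split_lshift split_rshift.
  - by move: (H (rshift k1 i) (rshift n1 j)); rewrite block_mxEdr !split_rshift.
case=> hA hB hC hD i j; rewrite -[i]splitK -[j]splitK.
case: (split i) => i'; case: (split j) => j'; rewrite !unsplitK.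
- by rewrite block_mxEul => /hA.
- by rewrite block_mxEur => /hB.
- by rewrite block_mxEdl => /hC.
- by rewrite block_mxEdr => /hD.
Qed.

Lemma homog_rowP n1 n2 k p (a1 : 'I_n1 -> int) (a2 : 'I_n2 -> int) (b : 'I_k -> int)
    (A : 'M[R]_(k, n1)) B :
  homog p (catdeg a1 a2) b (row_mx A B) <-> homog p a1 b A /\ homog p a2 b B.
Proof.
rewrite /catdeg; split.
  move=> H; split=> i j.
  - by move: (H i (lshift n2 j)); rewrite row_mxEl split_lshift.
  - by move: (H i (rshift n1 j)); rewrite row_mxEr split_rshift.
case=> hA hB i j; rewrite -[j]splitK; case: (split j) => j'; rewrite unsplitK.
- by rewrite row_mxEl => /hA.
- by rewrite row_mxEr => /hB.
Qed.

Lemma homog_colP n k1 k2 p (a : 'I_n -> int) (b1 : 'I_k1 -> int) (b2 : 'I_k2 -> int)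
    (A : 'M[R]_(k1, n)) B :
  homog p a (catdeg b1 b2) (col_mx A B) <-> homog p a b1 A /\ homog p a b2 B.
Proof.
rewrite /catdeg; split.
  move=> H; split=> i j.
  - by move: (H (lshift k2 i) j); rewrite col_mxEu split_lshift.
  - by move: (H (rshift k1 i) j); rewrite col_mxEd split_rshift.
case=> hA hB i j; rewrite -[i]splitK; case: (split i) => i'; rewrite unsplitK.
- by rewrite col_mxEu => /hA.
- by rewrite col_mxEd => /hB.
Qed.

Lemma homog_shiftl k l p s (a : 'I_l -> int) (b : 'I_k -> int) (M : 'M[R]_(k, l)) :
  homog p (shiftdeg s a) b M <-> homog (p - s) a b M.
Proof. by rewrite /shiftdeg; split=> H i j /H ->; lia. Qed.

Lemma homog_shiftr k l p t (a : 'I_l -> int) (b : 'I_k -> int) (M : 'M[R]_(k, l)) :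
  homog p a (shiftdeg t b) M <-> homog (p + t) a b M.
Proof. by rewrite /shiftdeg; split=> H i j /H; lia. Qed.
End Homogeneous.

Ltac homog_factor := first
  [ eassumption | apply: homog0 | eapply homogM; [homog_factor | homog_factor | reflexivity] ].

Ltac homog_leaf := match goal with
  | |- homog _ _ _ 0 => apply: homog0
  | |- homog _ _ _ 1%:M => apply: homog1; lia
  | H : homog ?q ?a ?b ?M |- homog ?p ?a ?b ?M =>
      refine (eq_ind q (fun x => homog x a b M) H p _); lia
  | |- homog _ _ _ (_ *m _) => eapply homogM; [homog_factor | homog_factor | lia]
  end.

Ltac homog_step := match goal with
  | |- homog _ _ _ 0 => apply: homog0
  | |- homog _ _ _ (- _) => apply: homogN
  | |- homog _ _ _ (_ + _) => apply: homogD
  | |- homog _ _ _ (block_mx _ _ _ _) =>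
      apply: (iffRL (homog_blockP _ _ _ _ _ _ _ _ _ _ _ _ _)); split
  | |- homog _ _ _ (row_mx _ _) => apply: (iffRL (homog_rowP _ _ _ _ _ _ _ _ _)); split
  | |- homog _ _ _ (col_mx _ _) => apply: (iffRL (homog_colP _ _ _ _ _ _ _ _ _)); split
  | |- homog _ (shiftdeg _ _) _ _ => apply: (iffRL (homog_shiftl _ _ _ _ _ _ _))
  | |- homog _ _ (shiftdeg _ _) _ => apply: (iffRL (homog_shiftr _ _ _ _ _ _ _))
  end.

Ltac homog_solve := repeat homog_step; try homog_leaf.

Section BlockMatrices.
Context {R : pzRingType}.

Lemma row_mx_col0 n1 n2 p1 p2 (a : 'M[R]_(n1, p1)) (b : 'M[R]_(n2, p1)) :
  row_mx (col_mx a b) (0 : 'M_(n1 + n2, p2)) = block_mx a 0 b 0.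
Proof. by rewrite -col_mx0 -block_mxEh. Qed.

Lemma row0_mx_col n1 n2 p1 p2 (a : 'M[R]_(n1, p2)) (b : 'M[R]_(n2, p2)) :
  row_mx (0 : 'M_(n1 + n2, p1)) (col_mx a b) = block_mx 0 a 0 b.
Proof. by rewrite -col_mx0 -block_mxEh. Qed.

Lemma col_mx_row0 n1 n2 p1 p2 (a : 'M[R]_(n1, p1)) (b : 'M[R]_(n1, p2)) :
  col_mx (row_mx a b) (0 : 'M_(n2, p1 + p2)) = block_mx a b 0 0.
Proof. by rewrite -row_mx0. Qed.

Lemma col0_mx_row n1 n2 p1 p2 (a : 'M[R]_(n2, p1)) (b : 'M[R]_(n2, p2)) :
  col_mx (0 : 'M_(n1, p1 + p2)) (row_mx a b) = block_mx 0 0 a b.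
Proof. by rewrite -row_mx0. Qed.

End BlockMatrices.

Lemma eq_by_rel {V : zmodType} {x y a b : V} : a = b -> x - y = a - b -> x = y.
Proof. by move=> -> /eqP; rewrite subrr subr_eq0 => /eqP. Qed.

Lemma eq_by_rel2 {V : zmodType} {x y a b a' b' : V} :
  a = b -> a' = b' -> x - y = (a - b) + (a' - b') -> x = y.
Proof. by move=> -> ->; rewrite !subrr addr0 => /eqP; rewrite subr_eq0 => /eqP. Qed.

Lemma eq_by_rel4 {V : zmodType} {x y a b a' b' a'' b'' a3 b3 : V} :
  a = b -> a' = b' -> a'' = b'' -> a3 = b3 ->
  x - y = (a - b) + (a' - b') + (a'' - b'') + (a3 - b3) -> x = y.
Proof. by move=> -> -> -> ->; rewrite !subrr !addr0 => /eqP; rewrite subr_eq0 => /eqP. Qed.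

Ltac blk_simp := repeat progress rewrite -?block_mxEh ?row_mx_col0 ?col_mx_row0 ?row0_mx_col
  ?col0_mx_row ?mulmx_block ?mul_mx_row ?mul_col_mx ?mul_row_col ?mul_col_row ?mul_row_block
  ?mul_block_col ?mulmx0 ?mul0mx ?mulmx1 ?mul1mx ?mulmxN ?mulNmx ?addr0 ?add0r ?oppr0 ?opprK
  ?row_mx0 ?col_mx0 ?block_mx0 -?block_mxEh ?add_block_mx ?add_col_mx ?add_row_mx
  ?opp_block_mx ?opp_row_mx ?opp_col_mx.

Ltac blk_eq0 := apply/eqP; rewrite ?block_mx_eq0 ?col_mx_eq0 ?row_mx_eq0 -?andbA;
  repeat (apply/andP; split); apply/eqP.

Ltac mx_norm := rewrite ?mulmxDl ?mulmxDr ?mulmxBl ?mulmxBr ?mulNmx ?mulmxN ?opprK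
  ?mul0mx ?mulmx0 ?mul1mx ?mulmx1 -?mulmxA.

(* Proves identities that are linear in the matrix products occurring in them: the products
   are generalized to atoms and the identity is checked entrywise. *)
Ltac mx_lin := repeat match goal with |- context [?A *m ?B] =>
    let x := fresh "x" in set x := (A *m B); clearbody x end;
  apply/matrixP=> ? ?; rewrite !mxE; ring.

Section SBlocks.
Context {R : comPzRingType} {m : nat}.

(* In the decomposition C ⊕ C[-1] ⊕ 𝖱, [Smx f g h k l] is the matrix
   [[f,0,0],[g,f,h],[k,0,l]]: these are exactly the maps commuting with χ.
   [Smx_odd] replaces the second [f] by [-f]: the maps anticommuting with χ,
   such as total differentials and S-chain homotopies. *)
Definition Smx {n1 n2 : nat} (f g : 'M[R]_(n2, n1)) (h : 'M[R]_(n2, m)) (k : 'M[R]_(m, n1))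
    (l : 'M[R]_m) : 'M[R]_(n2 + n2 + m, n1 + n1 + m) :=
  block_mx (block_mx f 0 g f) (col_mx 0 h) (row_mx k 0) l.

Definition Smx_odd {n1 n2 : nat} (f g : 'M[R]_(n2, n1)) (h : 'M[R]_(n2, m))
    (k : 'M[R]_(m, n1)) (l : 'M[R]_m) : 'M[R]_(n2 + n2 + m, n1 + n1 + m) :=
  block_mx (block_mx f 0 g (- f)) (col_mx 0 h) (row_mx k 0) l.

Section Products.
Variables (n1 n2 n3 : nat).
Variables (f g : 'M[R]_(n2, n1)) (h : 'M[R]_(n2, m)) (k : 'M[R]_(m, n1)) (l : 'M[R]_m).
Variables (f' g' : 'M[R]_(n3, n2)) (h' : 'M[R]_(n3, m)) (k' : 'M[R]_(m, n2)) (l' : 'M[R]_m).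

Lemma Smx_mul : Smx f' g' h' k' l' *m Smx f g h k l =
  Smx (f' *m f) (g' *m f + f' *m g + h' *m k) (f' *m h + h' *m l) (k' *m f + l' *m k) (l' *m l).
Proof. by rewrite /Smx; blk_simp. Qed.

Lemma Smx_mul_odd : Smx f' g' h' k' l' *m Smx_odd f g h k l =
  Smx_odd (f' *m f) (g' *m f + f' *m g + h' *m k) (f' *m h + h' *m l) (k' *m f + l' *m k)
    (l' *m l).
Proof. by rewrite /Smx /Smx_odd; blk_simp. Qed.

Lemma Smx_odd_mul : Smx_odd f' g' h' k' l' *m Smx f g h k l =
  Smx_odd (f' *m f) (g' *m f - f' *m g + h' *m k) (- (f' *m h) + h' *m l)
    (k' *m f + l' *m k) (l' *m l).
Proof. by rewrite /Smx /Smx_odd; blk_simp. Qed.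

Lemma Smx_odd_mul_odd : Smx_odd f' g' h' k' l' *m Smx_odd f g h k l =
  Smx (f' *m f) (g' *m f - f' *m g + h' *m k) (- (f' *m h) + h' *m l) (k' *m f + l' *m k)
    (l' *m l).
Proof. by rewrite /Smx /Smx_odd; blk_simp. Qed.
End Products.

Section Linear.
Variables (n1 n2 : nat).
Variables (f g f' g' : 'M[R]_(n2, n1)) (h h' : 'M[R]_(n2, m)) (k k' : 'M[R]_(m, n1)).
Variables (l l' : 'M[R]_m).

Lemma Smx_add :
  Smx f g h k l + Smx f' g' h' k' l' = Smx (f + f') (g + g') (h + h') (k + k') (l + l').
Proof. by rewrite /Smx; blk_simp. Qed.

Lemma Smx_odd_add : Smx_odd f g h k l + Smx_odd f' g' h' k' l' =
  Smx_odd (f + f') (g + g') (h + h') (k + k') (l + l').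
Proof. by rewrite /Smx_odd; blk_simp; rewrite opprD. Qed.

Lemma Smx_opp : - Smx f g h k l = Smx (- f) (- g) (- h) (- k) (- l).
Proof. by rewrite /Smx; blk_simp. Qed.

Lemma Smx0 : 0 = Smx (0 : 'M[R]_(n2, n1)) 0 0 0 0.
Proof. by rewrite /Smx; blk_simp. Qed.

Lemma Smx_odd0 : 0 = Smx_odd (0 : 'M[R]_(n2, n1)) 0 0 0 0.
Proof. by rewrite /Smx_odd; blk_simp. Qed.

Lemma Smx_inj : Smx f g h k l = Smx f' g' h' k' l' ->
  [/\ f = f', g = g', h = h', k = k' & l = l'].
Proof.
by rewrite /Smx => /eq_block_mx [/eq_block_mx [? _ ? _] /eq_col_mx [_ ?] /eq_row_mx [? _] ?].
Qed.

Lemma Smx_odd_inj : Smx_odd f g h k l = Smx_odd f' g' h' k' l' ->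
  [/\ f = f', g = g', h = h', k = k' & l = l'].
Proof.
by rewrite /Smx_odd => /eq_block_mx [/eq_block_mx [? _ ? _] /eq_col_mx [_ ?] /eq_row_mx [? _] ?].
Qed.
End Linear.

Lemma Smx1 n : 1%:M = Smx (1%:M : 'M[R]_n) 0 0 0 1%:M.
Proof. by rewrite /Smx !scalar_mx_block; blk_simp. Qed.

Section Components.
Context {n1 n2 : nat}.
Implicit Type F : 'M[R]_(n2 + n2 + m, n1 + n1 + m).

Definition Sf F := ulsubmx (ulsubmx F).
Definition Sg F := dlsubmx (ulsubmx F).
Definition Sh F := dsubmx (ursubmx F).
Definition Sk F := lsubmx (dlsubmx F).
Definition Sl F := drsubmx F.

Let blockE F : F = block_mx (block_mx (Sf F) (ursubmx (ulsubmx F)) (Sg F) (drsubmx (ulsubmx F)))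
  (col_mx (usubmx (ursubmx F)) (Sh F)) (row_mx (Sk F) (rsubmx (dlsubmx F))) (Sl F).
Proof. by rewrite /Sf /Sg /Sh /Sk /Sl submxK vsubmxK hsubmxK submxK. Qed.

Lemma chi_comm_Smx F : F *m Smx 0 1%:M 0 0 0 = Smx 0 1%:M 0 0 0 *m F ->
  F = Smx (Sf F) (Sg F) (Sh F) (Sk F) (Sl F).
Proof.
have := blockE F; move: (Sf F) (Sg F) (Sh F) (Sk F) (Sl F) => f g h k l.
move: (ursubmx _) (drsubmx _) (usubmx _) (rsubmx _) => b d e i ->; rewrite /Smx; blk_simp.
case/eq_block_mx=> /eq_block_mx [-> _ -> _] /esym/eqP + /eqP.
by rewrite col_mx_eq0 row_mx_eq0 => /andP [_ /eqP ->] /andP [/eqP -> _].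
Qed.

Lemma chi_anti_Smx_odd F : Smx 0 1%:M 0 0 0 *m F + F *m Smx 0 1%:M 0 0 0 = 0 ->
  F = Smx_odd (Sf F) (Sg F) (Sh F) (Sk F) (Sl F).
Proof.
have := blockE F; move: (Sf F) (Sg F) (Sh F) (Sk F) (Sl F) => f g h k l.
move: (ursubmx _) (drsubmx _) (usubmx _) (rsubmx _) => b d e i ->; rewrite /Smx /Smx_odd; blk_simp.
move/eqP; rewrite block_mx_eq0 => /and4P [].
rewrite block_mx_eq0 col_mx_eq0 row_mx_eq0 => /and4P [/eqP -> _ /eqP fd _].
by case/andP=> _ /eqP -> /andP [/eqP -> _] _; rewrite -(addKr f d) fd addr0.
Qed.

Lemma S_componentsB F G : [/\ Sf (F - G) = Sf F - Sf G, Sg (F - G) = Sg F - Sg G,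
  Sh (F - G) = Sh F - Sh G, Sk (F - G) = Sk F - Sk G & Sl (F - G) = Sl F - Sl G].
Proof. by split; apply/matrixP=> i j; rewrite !mxE. Qed.

Section OfSmx.
Variables (f g : 'M[R]_(n2, n1)) (h : 'M[R]_(n2, m)) (k : 'M[R]_(m, n1)) (l : 'M[R]_m).
Lemma Sf_Smx : Sf (Smx f g h k l) = f. Proof. by rewrite /Sf /Smx !block_mxKul. Qed.
Lemma Sg_Smx : Sg (Smx f g h k l) = g. Proof. by rewrite /Sg /Smx block_mxKul block_mxKdl. Qed.
Lemma Sh_Smx : Sh (Smx f g h k l) = h. Proof. by rewrite /Sh /Smx block_mxKur col_mxKd. Qed.
Lemma Sk_Smx : Sk (Smx f g h k l) = k. Proof. by rewrite /Sk /Smx block_mxKdl row_mxKl. Qed.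
Lemma Sl_Smx : Sl (Smx f g h k l) = l. Proof. by rewrite /Sl /Smx block_mxKdr. Qed.
End OfSmx.
End Components.
End SBlocks.

Section SHomotopy.
Context {R : comPzRingType} {m : nat} {rd : 'I_m -> int}.
Local Notation Sc := (@Scx R m rd).
Local Notation mor X Y := 'M[R]_(dimC Y + dimC Y + m, dimC X + dimC X + m).

Lemma Smorph1 (X : Sc) : is_Smorph (1%:M : mor X X).
Proof. by split; rewrite ?mulmx1 ?mul1mx //; apply: homog1. Qed.

Lemma Smorph_mul {X Y Z : Sc} {F : mor X Y} {G : mor Y Z} :
  is_Smorph F -> is_Smorph G -> is_Smorph (G *m F).
Proof.
case=> hF cF xF [hG cG xG]; split.
- exact: homogM hF hG _.
- by rewrite -mulmxA cF !mulmxA cG.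
- by rewrite -mulmxA xF !mulmxA xG.
Qed.

Lemma Shomotopic_refl (X Y : Sc) (F : mor X Y) : Shomotopic F F.
Proof. by exists 0; split; rewrite ?mulmx0 ?mul0mx ?addr0 ?subrr //; apply: homog0. Qed.

Lemma Shomotopic_trans {X Y : Sc} {F G H : mor X Y} :
  Shomotopic F G -> Shomotopic G H -> Shomotopic F H.
Proof.
case=> K [hK xK eK] [K' [hK' xK' eK']]; exists (K + K'); split.
- exact: homogD.
- by rewrite mulmxDr mulmxDl addrACA xK xK' addr0.
- by rewrite mulmxDr mulmxDl addrACA eK eK' addrA subrK.
Qed.

Lemma Shomotopic_mul {X' X Y Y' : Sc} {F G : mor X Y} {A : mor X' X} {B : mor Y Y'} :
  Shomotopic F G -> is_Smorph A -> is_Smorph B -> Shomotopic (B *m F *m A) (B *m G *m A).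
Proof.
case=> K [hK xK eK] [hA cA xA] [hB cB xB]; exists (B *m K *m A); split.
- by homog_leaf.
- have -> : chi Y' *m (B *m K *m A) = B *m (chi Y *m K) *m A by rewrite !mulmxA xB.
  have -> : B *m K *m A *m chi X' = B *m (K *m chi X) *m A by rewrite -!mulmxA xA.
  by rewrite -mulmxDl -mulmxDr xK mulmx0 mul0mx.
- have -> : tot Y' *m (B *m K *m A) = B *m (tot Y *m K) *m A by rewrite !mulmxA cB.
  have -> : B *m K *m A *m tot X' = B *m (K *m tot X) *m A by rewrite -!mulmxA cA.
  by rewrite -mulmxDl -mulmxDr eK mulmxBr mulmxBl.
Qed.

Lemma Sequiv_refl (X : Sc) : Sequiv X X.
Proof. by exists 1%:M, 1%:M; split; rewrite ?mulmx1; apply: Smorph1 || apply: Shomotopic_refl. Qed.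

Lemma Sequiv_sym {X Y : Sc} : Sequiv X Y -> Sequiv Y X.
Proof. by case=> F [G [? ? ? ?]]; exists G, F; split. Qed.

Lemma Sequiv_trans {X Y Z : Sc} : Sequiv X Y -> Sequiv Y Z -> Sequiv X Z.
Proof.
case=> F [G [mF mG hGF hFG]] [F' [G' [mF' mG' hGF' hFG']]].
exists (F' *m F), (G *m G'); split; try exact: Smorph_mul.
- apply: Shomotopic_trans hGF.
  by move: (Shomotopic_mul hGF' mF mG); rewrite mulmx1 !mulmxA.
- apply: Shomotopic_trans hFG'.
  by move: (Shomotopic_mul hFG mG' mF'); rewrite mulmx1 !mulmxA.
Qed.
End SHomotopy.

Section SBlockForm.
Context {R : comPzRingType} {m : nat} {rd : 'I_m -> int}.
Local Notation Sc := (@Scx R m rd).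
Local Notation mor X Y := 'M[R]_(dimC Y + dimC Y + m, dimC X + dimC X + m).

Lemma totE (X : Sc) : tot X = Smx_odd (dd X) (vv X) (de2 X) (de1 X) (rr X).
Proof. by []. Qed.

Lemma chiE (X : Sc) : chi X = Smx 0 1%:M 0 0 0.
Proof. by rewrite /chi /Smx; blk_simp. Qed.

Definition Scx_eqs (X : Sc) := [/\ dd X *m dd X = 0,
  vv X *m dd X - dd X *m vv X + de2 X *m de1 X = 0, - (dd X *m de2 X) + de2 X *m rr X = 0,
  de1 X *m dd X + rr X *m de1 X = 0 & rr X *m rr X = 0].

Definition Scx_degs (X : Sc) := [/\ homog (-1) (cd X) (cd X) (dd X),
  homog (-2) (cd X) (cd X) (vv X), homog (-2) rd (cd X) (de2 X),
  homog (-1) (cd X) rd (de1 X) & homog (-1) rd rd (rr X)].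

Definition Smorph_eqs (X Y : Sc) (f g : 'M[R]_(dimC Y, dimC X)) (h : 'M[R]_(dimC Y, m))
    (k : 'M[R]_(m, dimC X)) (l : 'M[R]_m) :=
  [/\ f *m dd X = dd Y *m f,
      g *m dd X + f *m vv X + h *m de1 X = vv Y *m f - dd Y *m g + de2 Y *m k,
      f *m de2 X + h *m rr X = - (dd Y *m h) + de2 Y *m l,
      k *m dd X + l *m de1 X = de1 Y *m f + rr Y *m k & l *m rr X = rr Y *m l].

Section Degrees.
Variables (X Y : Sc) (p q : int) (f g : 'M[R]_(dimC Y, dimC X)) (h : 'M[R]_(dimC Y, m)).
Variables (k : 'M[R]_(m, dimC X)) (l : 'M[R]_m).
Hypothesis pq : p = q + 1.

Lemma homog_SmxP : homog p (tdeg X) (tdeg Y) (Smx f g h k l) <->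
  [/\ homog p (cd X) (cd Y) f, homog q (cd X) (cd Y) g, homog q rd (cd Y) h,
      homog p (cd X) rd k & homog p rd rd l].
Proof.
rewrite /tdeg /Smx; split; last by case=> *; homog_solve.
case/homog_blockP=> /homog_blockP [? _ /homog_shiftr ? _] /homog_colP [_ /homog_shiftr ?].
by case/homog_rowP=> ? _ ?; split; homog_solve.
Qed.

Lemma homog_Smx_oddP : homog p (tdeg X) (tdeg Y) (Smx_odd f g h k l) <->
  [/\ homog p (cd X) (cd Y) f, homog q (cd X) (cd Y) g, homog q rd (cd Y) h,
      homog p (cd X) rd k & homog p rd rd l].
Proof.
rewrite /tdeg /Smx_odd; split; last by case=> *; homog_solve.
case/homog_blockP=> /homog_blockP [? _ /homog_shiftr ? _] /homog_colP [_ /homog_shiftr ?].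
by case/homog_rowP=> ? _ ?; split; homog_solve.
Qed.
End Degrees.

Lemma is_ScxP (X : Sc) : is_Scx X <-> Scx_eqs X /\ Scx_degs X.
Proof.
rewrite /is_Scx totE Smx_odd_mul_odd (Smx0 (dimC X) (dimC X)).
have degP := homog_Smx_oddP X X (-1) (-2) (dd X) (vv X) (de2 X) (de1 X) (rr X) erefl.
split=> [[/degP [d1 d2 d3 d4 d5] /Smx_inj [e1 e2 e3 e4 e5]] | ].
  by split; split.
by case=> [[e1 e2 e3 e4 e5] degs]; split; [apply/degP | congr Smx].
Qed.

Section Maps.
Context {X Y : Sc}.

Lemma Smx_chi_comm (f g : 'M[R]_(dimC Y, dimC X)) h k l :
  Smx f g h k l *m chi X = chi Y *m Smx f g h k l.
Proof.
by rewrite !chiE !Smx_mul; congr Smx; rewrite ?(mulmx0, mul0mx, mulmx1, mul1mx, addr0, add0r).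
Qed.

Lemma Smx_odd_chi_anti (p q : 'M[R]_(dimC Y, dimC X)) s t u :
  chi Y *m Smx_odd p q s t u + Smx_odd p q s t u *m chi X = 0.
Proof.
rewrite !chiE Smx_mul_odd Smx_odd_mul Smx_odd_add (Smx_odd0 (dimC X) (dimC Y)).
by congr Smx_odd; rewrite ?(mulmx0, mul0mx, mulmx1, mul1mx, addr0, add0r, oppr0, subrr).
Qed.

Lemma Smorph_eqsP (f g : 'M[R]_(dimC Y, dimC X)) h k l :
  Smx f g h k l *m tot X = tot Y *m Smx f g h k l <-> Smorph_eqs X Y f g h k l.
Proof.
rewrite !totE Smx_mul_odd Smx_odd_mul.
by split=> [/Smx_odd_inj [*] | [-> -> -> -> ->]]; first split.
Qed.

Lemma is_Smorph_SmxP (f g : 'M[R]_(dimC Y, dimC X)) h k l :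
  is_Smorph (Smx f g h k l) <-> Smorph_eqs X Y f g h k l /\
  [/\ homog 0 (cd X) (cd Y) f, homog (-1) (cd X) (cd Y) g, homog (-1) rd (cd Y) h,
      homog 0 (cd X) rd k & homog 0 rd rd l].
Proof.
have degP := homog_SmxP X Y 0 (-1) f g h k l erefl.
split=> [[/degP degs /Smorph_eqsP eqs _] | [/Smorph_eqsP eqs /degP degs]] //.
by split=> //; apply: Smx_chi_comm.
Qed.

Lemma Smorph_Smx {F : mor X Y} : is_Smorph F -> F = Smx (Sf F) (Sg F) (Sh F) (Sk F) (Sl F).
Proof. by case=> _ _; rewrite !chiE; apply: chi_comm_Smx. Qed.

Lemma Smx_odd_boundary (p q : 'M[R]_(dimC Y, dimC X)) s t u :
  tot Y *m Smx_odd p q s t u + Smx_odd p q s t u *m tot X =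
  Smx (dd Y *m p + p *m dd X)
      (vv Y *m p - dd Y *m q + de2 Y *m t + (q *m dd X - p *m vv X + s *m de1 X))
      (- (dd Y *m s) + de2 Y *m u + (- (p *m de2 X) + s *m rr X))
      (de1 Y *m p + rr Y *m t + (t *m dd X + u *m de1 X)) (rr Y *m u + u *m rr X).
Proof. by rewrite !totE !Smx_odd_mul_odd Smx_add. Qed.

Lemma Shomotopic_Smx_odd {F G : mor X Y} (p q : 'M[R]_(dimC Y, dimC X)) s t u :
  homog 1 (cd X) (cd Y) p -> homog 0 (cd X) (cd Y) q -> homog 0 rd (cd Y) s ->
  homog 1 (cd X) rd t -> homog 1 rd rd u ->
  tot Y *m Smx_odd p q s t u + Smx_odd p q s t u *m tot X = F - G -> Shomotopic F G.
Proof.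
move=> hp hq hs ht hu bd; exists (Smx_odd p q s t u).
by split=> //; [apply/(homog_Smx_oddP _ _ 1 0) | apply: Smx_odd_chi_anti].
Qed.

Lemma Shomotopy_Smx_odd {K : mor X Y} :
  homog 1 (tdeg X) (tdeg Y) K -> chi Y *m K + K *m chi X = 0 ->
  K = Smx_odd (Sf K) (Sg K) (Sh K) (Sk K) (Sl K) /\
  [/\ homog 1 (cd X) (cd Y) (Sf K), homog 0 (cd X) (cd Y) (Sg K), homog 0 rd (cd Y) (Sh K),
      homog 1 (cd X) rd (Sk K) & homog 1 rd rd (Sl K)].
Proof.
move=> hK; rewrite !chiE => /chi_anti_Smx_odd KE.
by split=> //; apply/(homog_Smx_oddP X Y 1 0) => //; rewrite -KE.
Qed.
End Maps.
End SBlockForm.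

Section Suspension.
Context {R : comPzRingType} {m : nat} {rd : 'I_m -> int}.
Local Notation Sc := (@Scx R m rd).
Local Notation mor X Y := 'M[R]_(dimC Y + dimC Y + m, dimC X + dimC X + m).

Lemma susp_eqs (X : Sc) : Scx_eqs X -> Scx_eqs (susp X).
Proof.
case=> d2 vd db ad r2; split=> /=; blk_simp.
- by blk_eq0.
- by blk_eq0; [apply: (eq_by_rel vd); mx_lin | mx_lin | | mx_lin].
- blk_eq0.
  + apply: (eq_by_rel2 (congr1 (mulmx^~ (de2 X)) vd) (congr1 (mulmx (vv X)) db)).
    by mx_norm; mx_lin.
  + apply: (eq_by_rel2 (congr1 (mulmx^~ (de2 X)) ad) (congr1 (mulmx (de1 X)) db)).
    by mx_norm; mx_lin.
- by rewrite addNr row_mx0.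
- by [].
Qed.

Lemma susp_Scx (X : Sc) : is_Scx X -> is_Scx (susp X).
Proof.
case/is_ScxP=> eqX [? ? ? ? ?]; apply/is_ScxP; split; first exact: susp_eqs.
by split=> /=; homog_solve.
Qed.

Definition susp_mor (X Y : Sc) (F : mor X Y) : mor (susp X) (susp Y) :=
  Smx (block_mx (Sf F) (Sh F) 0 (Sl F)) (block_mx (Sg F) 0 (Sk F) 0)
      (col_mx (Sg F *m de2 X + vv Y *m Sh F) (Sk F *m de2 X + de1 Y *m Sh F)) 0 (Sl F).

Lemma susp_mor_Smx (X Y : Sc) (f g : 'M[R]_(dimC Y, dimC X)) h k l :
  susp_mor X Y (Smx f g h k l) =
  Smx (block_mx f h 0 l) (block_mx g 0 k 0)
      (col_mx (g *m de2 X + vv Y *m h) (k *m de2 X + de1 Y *m h)) 0 l.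
Proof. by rewrite /susp_mor Sf_Smx Sg_Smx Sh_Smx Sk_Smx Sl_Smx. Qed.

Lemma susp_morB (X Y : Sc) (F G : mor X Y) :
  susp_mor X Y (F - G) = susp_mor X Y F - susp_mor X Y G.
Proof.
rewrite /susp_mor Smx_opp Smx_add; case: (S_componentsB F G) => -> -> -> -> ->.
by congr Smx; blk_simp => //; congr col_mx; mx_norm; mx_lin.
Qed.

Lemma susp_mor1 (X : Sc) : susp_mor X X 1%:M = 1%:M.
Proof.
by rewrite Smx1 susp_mor_Smx [RHS]Smx1; congr Smx; blk_simp; rewrite -?scalar_mx_block.
Qed.

Lemma susp_Smorph_eqs (X Y : Sc) (f g : 'M[R]_(dimC Y, dimC X)) h k l :
  Scx_eqs X -> Scx_eqs Y -> Smorph_eqs X Y f g h k l ->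
  Smorph_eqs (susp X) (susp Y) (block_mx f h 0 l) (block_mx g 0 k 0)
    (col_mx (g *m de2 X + vv Y *m h) (k *m de2 X + de1 Y *m h)) 0 l.
Proof.
case=> _ _ db _ _ [_ vd' _ ad' _] [M1 M2 M3 M4 M5].
split=> /=; blk_simp.
- congr block_mx => //; last by rewrite M5.
  by apply: (eq_by_rel (esym M3)); mx_norm; mx_lin.
- congr block_mx => //; try by mx_lin.
  by apply: (eq_by_rel M2); mx_norm; mx_lin.
- congr col_mx.
  + apply: (eq_by_rel4 (congr1 (mulmx^~ (de2 X)) M2) (congr1 (mulmx (vv Y)) M3)
      (congr1 (mulmx g) db) (esym (congr1 (mulmx^~ h) vd'))).
    by mx_norm; mx_lin.
  + apply: (eq_by_rel4 (congr1 (mulmx^~ (de2 X)) M4) (congr1 (mulmx (de1 Y)) M3)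
      (congr1 (mulmx k) db) (esym (congr1 (mulmx^~ h) ad'))).
    by mx_norm; mx_lin.
- by blk_simp.
- exact: M5.
Qed.

Lemma susp_Smorph {X Y : Sc} {F : mor X Y} :
  is_Scx X -> is_Scx Y -> is_Smorph F -> is_Smorph (susp_mor X Y F).
Proof.
case/is_ScxP=> eqX [? ? ? ? ?] /is_ScxP [eqY [? ? ? ? ?]] /[dup] /Smorph_Smx ->.
case/is_Smorph_SmxP=> eqF [? ? ? ? ?]; rewrite susp_mor_Smx.
apply/is_Smorph_SmxP; split; first exact: susp_Smorph_eqs.
by split=> /=; homog_solve.
Qed.

Definition susp_htpy (X Y : Sc) (p q : 'M[R]_(dimC Y, dimC X)) (s : 'M[R]_(dimC Y, m))
    (t : 'M[R]_(m, dimC X)) (u : 'M[R]_m) : mor (susp X) (susp Y) :=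
  Smx_odd (block_mx p (- s) 0 (- u)) (block_mx q 0 t 0)
    (col_mx (vv Y *m s + q *m de2 X) (de1 Y *m s + t *m de2 X)) 0 u.

Lemma susp_mor_boundary (X Y : Sc) (p q : 'M[R]_(dimC Y, dimC X)) s t u :
  Scx_eqs X -> Scx_eqs Y ->
  susp_mor X Y (tot Y *m Smx_odd p q s t u + Smx_odd p q s t u *m tot X) =
  tot (susp Y) *m susp_htpy X Y p q s t u + susp_htpy X Y p q s t u *m tot (susp X).
Proof.
case=> _ _ db _ _ [_ vd' _ ad' _].
rewrite !Smx_odd_boundary susp_mor_Smx /=; congr Smx; blk_simp => //.
- by congr block_mx; mx_lin.
- congr col_mx.
  + apply: (eq_by_rel2 (esym (congr1 (mulmx q) db)) (esym (congr1 (mulmx^~ s) vd'))).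
    by mx_norm; mx_lin.
  + apply: (eq_by_rel2 (esym (congr1 (mulmx t) db)) (esym (congr1 (mulmx^~ s) ad'))).
    by mx_norm; mx_lin.
- by rewrite addNr row_mx0.
Qed.

Lemma susp_Shomotopic (X Y : Sc) (F G : mor X Y) :
  is_Scx X -> is_Scx Y -> Shomotopic F G -> Shomotopic (susp_mor X Y F) (susp_mor X Y G).
Proof.
case/is_ScxP=> eqX [? ? ? ? ?] /is_ScxP [eqY [? ? ? ? ?]] [K [hK xK bdK]].
have [KE] := Shomotopy_Smx_odd hK xK; move: KE bdK.
move: (Sf K) (Sg K) (Sh K) (Sk K) (Sl K) => p q s t u -> bdK [? ? ? ? ?].
exists (susp_htpy X Y p q s t u); split; last first.
- by rewrite -susp_mor_boundary // bdK susp_morB.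
- exact: Smx_odd_chi_anti.
- by apply/(homog_Smx_oddP _ _ 1 0) => //; split=> /=; homog_solve.
Qed.

(* The chain condition on A - B determines its h-component, and makes A - B the boundary
   of Smx_odd 0 0 (col_mx al be) 0 0. *)
Lemma susp_null_Shomotopic {X Z : Sc} {A B : mor (susp X) (susp Z)}
    (al : 'M[R]_(dimC Z, m)) (be : 'M[R]_m) :
  is_Smorph A -> is_Smorph B -> homog (-2) rd (cd Z) al -> homog (-1) rd rd be ->
  Sf (A - B) = 0 -> Sg (A - B) = block_mx 0 al 0 be -> Sk (A - B) = 0 -> Sl (A - B) = 0 ->
  Shomotopic A B.
Proof.
move=> [_ cA xA] [_ cB xB] hal hbe Df Dg Dk Dl; set D := A - B.
have DE : D = Smx 0 (block_mx 0 al 0 be) (Sh D) 0 0.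
  rewrite -Df -Dg -Dk -Dl; apply: chi_comm_Smx.
  by rewrite -(chiE (susp X)) -(chiE (susp Z)) mulmxBl mulmxBr xA xB.
have : D *m tot (susp X) = tot (susp Z) *m D by rewrite mulmxBl mulmxBr cA cB.
rewrite DE => /Smorph_eqsP [_ + _ _ _]; rewrite ?(mul0mx, mulmx0, addr0, add0r, sub0r).
have -> : Sh D = col_mx (usubmx (Sh D)) (dsubmx (Sh D)) by rewrite vsubmxK.
rewrite /=; blk_simp; case/eq_block_mx=> _ eq1 _ eq2.
apply: (Shomotopic_Smx_odd (X := susp X) (Y := susp Z) 0 0 (col_mx al be) 0 0); try homog_solve.
rewrite Smx_odd_boundary -/D DE /=; congr Smx; blk_simp => //.
apply: esym; rewrite -[Sh D]vsubmxK.
by congr col_mx; [apply: (eq_by_rel eq1) | apply: (eq_by_rel eq2)]; mx_lin.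
Qed.

Lemma susp_mor_mul (X Y Z : Sc) (F : mor X Y) (G : mor Y Z) :
  is_Scx X -> is_Scx Y -> is_Scx Z -> is_Smorph F -> is_Smorph G ->
  Shomotopic (susp_mor Y Z G *m susp_mor X Y F) (susp_mor X Z (G *m F)).
Proof.
move=> sX sY sZ mF mG.
have mA := Smorph_mul (susp_Smorph sX sY mF) (susp_Smorph sY sZ mG).
have mB := susp_Smorph sX sZ (Smorph_mul mF mG).
have FE := Smorph_Smx mF; have GE := Smorph_Smx mG.
move: mF mG mA mB; rewrite FE GE.
move: (Sf F) (Sg F) (Sh F) (Sk F) (Sl F) (Sf G) (Sg G) (Sh G) (Sk G) (Sl G).
move=> f g h k l f' g' h' k' l' /is_Smorph_SmxP [_ [_ _ ? _ _]].
move=> /is_Smorph_SmxP [_ [_ ? _ ? _]]; rewrite Smx_mul !susp_mor_Smx => mA mB.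
apply: (susp_null_Shomotopic (g' *m h) (k' *m h) mA mB); try homog_solve.
all: rewrite Smx_mul Smx_opp Smx_add ?(Sf_Smx, Sg_Smx, Sk_Smx, Sl_Smx); blk_simp.
- by rewrite !subrr block_mx0.
- by congr block_mx; mx_lin.
- by [].
- by rewrite subrr.
Qed.
End Suspension.

Section Desuspension.
Context {R : comPzRingType} {m : nat} {rd : 'I_m -> int}.
Local Notation Sc := (@Scx R m rd).
Local Notation mor X Y := 'M[R]_(dimC Y + dimC Y + m, dimC X + dimC X + m).

Lemma desusp_eqs (X : Sc) : Scx_eqs X -> Scx_eqs (desusp X).
Proof.
case=> d2 vd db ad r2; split=> /=; blk_simp.
- by blk_eq0.
- by blk_eq0; [apply: (eq_by_rel vd) | apply: (eq_by_rel db) | |]; mx_lin.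
- by rewrite addNr col_mx0.
- blk_eq0.
  + apply: (eq_by_rel2 (congr1 (mulmx (de1 X)) vd) (congr1 (mulmx^~ (vv X)) ad)).
    by mx_norm; mx_lin.
  + apply: (eq_by_rel2 (congr1 (mulmx (de1 X)) db) (congr1 (mulmx^~ (de2 X)) ad)).
    by mx_norm; mx_lin.
- by [].
Qed.

Lemma desusp_Scx (X : Sc) : is_Scx X -> is_Scx (desusp X).
Proof.
case/is_ScxP=> eqX [? ? ? ? ?]; apply/is_ScxP; split; first exact: desusp_eqs.
by split=> /=; homog_solve.
Qed.

Definition desusp_mor (X Y : Sc) (F : mor X Y) : mor (desusp X) (desusp Y) :=
  Smx (block_mx (Sf F) 0 (Sk F) (Sl F)) (block_mx (Sg F) (Sh F) 0 0) 0
      (row_mx (Sk F *m vv X + de1 Y *m Sg F) (Sk F *m de2 X + de1 Y *m Sh F)) (Sl F).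

Lemma desusp_mor_Smx (X Y : Sc) (f g : 'M[R]_(dimC Y, dimC X)) h k l :
  desusp_mor X Y (Smx f g h k l) =
  Smx (block_mx f 0 k l) (block_mx g h 0 0) 0
      (row_mx (k *m vv X + de1 Y *m g) (k *m de2 X + de1 Y *m h)) l.
Proof. by rewrite /desusp_mor Sf_Smx Sg_Smx Sh_Smx Sk_Smx Sl_Smx. Qed.

Lemma desusp_morB (X Y : Sc) (F G : mor X Y) :
  desusp_mor X Y (F - G) = desusp_mor X Y F - desusp_mor X Y G.
Proof.
rewrite /desusp_mor Smx_opp Smx_add; case: (S_componentsB F G) => -> -> -> -> ->.
by congr Smx; blk_simp => //; congr row_mx; mx_norm; mx_lin.
Qed.

Lemma desusp_mor1 (X : Sc) : desusp_mor X X 1%:M = 1%:M.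
Proof.
by rewrite Smx1 desusp_mor_Smx [RHS]Smx1; congr Smx; blk_simp; rewrite -?scalar_mx_block.
Qed.

Lemma desusp_Smorph_eqs (X Y : Sc) (f g : 'M[R]_(dimC Y, dimC X)) h k l :
  Scx_eqs X -> Scx_eqs Y -> Smorph_eqs X Y f g h k l ->
  Smorph_eqs (desusp X) (desusp Y) (block_mx f 0 k l) (block_mx g h 0 0) 0
    (row_mx (k *m vv X + de1 Y *m g) (k *m de2 X + de1 Y *m h)) l.
Proof.
case=> _ vd db _ _ [_ _ _ ad' _] [M1 M2 M3 M4 M5].
split=> /=; blk_simp.
- by congr block_mx.
- congr block_mx; try by mx_lin.
  + by apply: (eq_by_rel M2); mx_norm; mx_lin.
  + by apply: (eq_by_rel M3); mx_norm; mx_lin.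
- by [].
- congr row_mx.
  + apply: (eq_by_rel4 (congr1 (mulmx^~ (vv X)) M4) (congr1 (mulmx (de1 Y)) M2)
      (congr1 (mulmx k) vd) (esym (congr1 (mulmx^~ g) ad'))).
    by mx_norm; mx_lin.
  + apply: (eq_by_rel4 (congr1 (mulmx^~ (de2 X)) M4) (congr1 (mulmx (de1 Y)) M3)
      (congr1 (mulmx k) db) (esym (congr1 (mulmx^~ h) ad'))).
    by mx_norm; mx_lin.
- exact: M5.
Qed.

Lemma desusp_Smorph {X Y : Sc} {F : mor X Y} :
  is_Scx X -> is_Scx Y -> is_Smorph F -> is_Smorph (desusp_mor X Y F).
Proof.
case/is_ScxP=> eqX [? ? ? ? ?] /is_ScxP [eqY [? ? ? ? ?]] /[dup] /Smorph_Smx ->.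
case/is_Smorph_SmxP=> eqF [? ? ? ? ?]; rewrite desusp_mor_Smx.
apply/is_Smorph_SmxP; split; first exact: desusp_Smorph_eqs.
by split=> /=; homog_solve.
Qed.

Definition desusp_htpy (X Y : Sc) (p q : 'M[R]_(dimC Y, dimC X)) (s : 'M[R]_(dimC Y, m))
    (t : 'M[R]_(m, dimC X)) (u : 'M[R]_m) : mor (desusp X) (desusp Y) :=
  Smx_odd (block_mx p 0 t u) (block_mx q s 0 0) 0
    (row_mx (t *m vv X + de1 Y *m q) (t *m de2 X + de1 Y *m s)) u.

Lemma desusp_mor_boundary (X Y : Sc) (p q : 'M[R]_(dimC Y, dimC X)) s t u :
  Scx_eqs X -> Scx_eqs Y ->
  desusp_mor X Y (tot Y *m Smx_odd p q s t u + Smx_odd p q s t u *m tot X) =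
  tot (desusp Y) *m desusp_htpy X Y p q s t u + desusp_htpy X Y p q s t u *m tot (desusp X).
Proof.
case=> _ vd db _ _ [_ _ _ ad' _].
rewrite !Smx_odd_boundary desusp_mor_Smx /=; congr Smx; blk_simp => //.
- by congr block_mx; mx_lin.
- by rewrite subrr col_mx0.
- congr row_mx.
  + apply: (eq_by_rel2 (esym (congr1 (mulmx^~ q) ad')) (esym (congr1 (mulmx t) vd))).
    by mx_norm; mx_lin.
  + apply: (eq_by_rel2 (esym (congr1 (mulmx t) db)) (esym (congr1 (mulmx^~ s) ad'))).
    by mx_norm; mx_lin.
Qed.

Lemma desusp_Shomotopic (X Y : Sc) (F G : mor X Y) :
  is_Scx X -> is_Scx Y -> Shomotopic F G -> Shomotopic (desusp_mor X Y F) (desusp_mor X Y G).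
Proof.
case/is_ScxP=> eqX [? ? ? ? ?] /is_ScxP [eqY [? ? ? ? ?]] [K [hK xK bdK]].
have [KE] := Shomotopy_Smx_odd hK xK; move: KE bdK.
move: (Sf K) (Sg K) (Sh K) (Sk K) (Sl K) => p q s t u -> bdK [? ? ? ? ?].
exists (desusp_htpy X Y p q s t u); split; last first.
- by rewrite -desusp_mor_boundary // bdK desusp_morB.
- exact: Smx_odd_chi_anti.
- by apply/(homog_Smx_oddP _ _ 1 0) => //; split=> /=; homog_solve.
Qed.

Lemma desusp_null_Shomotopic {X Z : Sc} {A B : mor (desusp X) (desusp Z)}
    (ga : 'M[R]_(m, dimC X)) (de : 'M[R]_m) :
  is_Smorph A -> is_Smorph B -> homog (-1) (cd X) rd ga -> homog (-1) rd rd de ->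
  Sf (A - B) = 0 -> Sg (A - B) = block_mx 0 0 ga de -> Sh (A - B) = 0 -> Sl (A - B) = 0 ->
  Shomotopic A B.
Proof.
move=> [_ cA xA] [_ cB xB] hga hde Df Dg Dh Dl; set D := A - B.
have DE : D = Smx 0 (block_mx 0 0 ga de) 0 (Sk D) 0.
  rewrite -Df -Dg -Dh -Dl; apply: chi_comm_Smx.
  by rewrite -(chiE (desusp X)) -(chiE (desusp Z)) mulmxBl mulmxBr xA xB.
have : D *m tot (desusp X) = tot (desusp Z) *m D by rewrite mulmxBl mulmxBr cA cB.
rewrite DE => /Smorph_eqsP [_ + _ _ _]; rewrite ?(mul0mx, mulmx0, addr0, add0r, sub0r).
have -> : Sk D = row_mx (lsubmx (Sk D)) (rsubmx (Sk D)) by rewrite hsubmxK.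
rewrite /=; blk_simp; case/eq_block_mx=> _ _ eq1 eq2.
apply: (Shomotopic_Smx_odd (X := desusp X) (Y := desusp Z) 0 0 0 (row_mx ga de) 0);
  try homog_solve.
rewrite Smx_odd_boundary -/D DE /=; congr Smx; blk_simp => //.
apply: esym; rewrite -[Sk D]hsubmxK.
by congr row_mx; [apply: (eq_by_rel (esym eq1)) | apply: (eq_by_rel (esym eq2))]; mx_lin.
Qed.

Lemma desusp_mor_mul (X Y Z : Sc) (F : mor X Y) (G : mor Y Z) :
  is_Scx X -> is_Scx Y -> is_Scx Z -> is_Smorph F -> is_Smorph G ->
  Shomotopic (desusp_mor Y Z G *m desusp_mor X Y F) (desusp_mor X Z (G *m F)).
Proof.
move=> sX sY sZ mF mG.
have mA := Smorph_mul (desusp_Smorph sX sY mF) (desusp_Smorph sY sZ mG).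
have mB := desusp_Smorph sX sZ (Smorph_mul mF mG).
have FE := Smorph_Smx mF; have GE := Smorph_Smx mG.
move: mF mG mA mB; rewrite FE GE.
move: (Sf F) (Sg F) (Sh F) (Sk F) (Sl F) (Sf G) (Sg G) (Sh G) (Sk G) (Sl G).
move=> f g h k l f' g' h' k' l' /is_Smorph_SmxP [_ [_ ? ? _ _]].
move=> /is_Smorph_SmxP [_ [_ _ _ ? _]]; rewrite Smx_mul !desusp_mor_Smx => mA mB.
apply: (desusp_null_Shomotopic (k' *m g) (k' *m h) mA mB); try homog_solve.
all: rewrite Smx_mul Smx_opp Smx_add ?(Sf_Smx, Sg_Smx, Sh_Smx, Sl_Smx); blk_simp.
- by rewrite !subrr block_mx0.
- by congr block_mx; mx_lin.
- by [].
- by rewrite subrr.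
Qed.
End Desuspension.

Section SequivMap.
Context {R : comPzRingType} {m : nat} {rd : 'I_m -> int}.
Local Notation Sc := (@Scx R m rd).
Local Notation mor X Y := 'M[R]_(dimC Y + dimC Y + m, dimC X + dimC X + m).

Variables (Phi : Sc -> Sc) (Phi_mor : forall X Y : Sc, mor X Y -> mor (Phi X) (Phi Y)).
Hypothesis Phi_Smorph : forall (X Y : Sc) (F : mor X Y),
  is_Scx X -> is_Scx Y -> is_Smorph F -> is_Smorph (Phi_mor X Y F).
Hypothesis Phi_mor1 : forall X : Sc, Phi_mor X X 1%:M = 1%:M.
Hypothesis Phi_Shomotopic : forall (X Y : Sc) (F G : mor X Y),
  is_Scx X -> is_Scx Y -> Shomotopic F G -> Shomotopic (Phi_mor X Y F) (Phi_mor X Y G).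
Hypothesis Phi_mor_mul : forall (X Y Z : Sc) (F : mor X Y) (G : mor Y Z),
  is_Scx X -> is_Scx Y -> is_Scx Z -> is_Smorph F -> is_Smorph G ->
  Shomotopic (Phi_mor Y Z G *m Phi_mor X Y F) (Phi_mor X Z (G *m F)).

Lemma Sequiv_map (X Y : Sc) : is_Scx X -> is_Scx Y -> Sequiv X Y -> Sequiv (Phi X) (Phi Y).
Proof.
move=> sX sY [F [G [mF mG hGF hFG]]].
exists (Phi_mor X Y F), (Phi_mor Y X G); split; try exact: Phi_Smorph.
- apply: Shomotopic_trans (Phi_mor_mul _ _ _ _ _ sX sY sX mF mG) _.
  by rewrite -(Phi_mor1 X); apply: Phi_Shomotopic.
- apply: Shomotopic_trans (Phi_mor_mul _ _ _ _ _ sY sX sY mG mF) _.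
  by rewrite -(Phi_mor1 Y); apply: Phi_Shomotopic.
Qed.
End SequivMap.

Section SuspensionEquivalences.
Context {R : comPzRingType} {m : nat} {rd : 'I_m -> int}.
Local Notation Sc := (@Scx R m rd).

Lemma susp_Sequiv {X Y : Sc} : is_Scx X -> is_Scx Y -> Sequiv X Y -> Sequiv (susp X) (susp Y).
Proof.
apply: (Sequiv_map susp susp_mor) => *.
- exact: susp_Smorph.
- exact: susp_mor1.
- exact: susp_Shomotopic.
- exact: susp_mor_mul.
Qed.

Lemma desusp_Sequiv {X Y : Sc} :
  is_Scx X -> is_Scx Y -> Sequiv X Y -> Sequiv (desusp X) (desusp Y).
Proof.
apply: (Sequiv_map desusp desusp_mor) => *.
- exact: desusp_Smorph.
- exact: desusp_mor1.
- exact: desusp_Shomotopic.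
- exact: desusp_mor_mul.
Qed.
End SuspensionEquivalences.

Section SuspensionInverses.
Context {R : comPzRingType} {m : nat} {rd : 'I_m -> int}.
Local Notation Sc := (@Scx R m rd).

(* Here C_{ΣΣ^{-1}} = C ⊕ 𝖱 ⊕ 𝖱, and the homotopy p cancels the two extra copies of 𝖱
   against each other; likewise for Σ^{-1}Σ below. *)
Lemma Sequiv_susp_desusp (X : Sc) : is_Scx X -> Sequiv X (susp (desusp X)).
Proof.
case/is_ScxP=> [[_ _ _ ad _] [? ? ? ? ?]].
pose f1 : 'M[R]_(dimC X + m + m, dimC X) := col_mx (col_mx 1%:M 0) (de1 X).
pose f2 : 'M[R]_(dimC X, dimC X + m + m) := row_mx (row_mx 1%:M 0) 0.
pose k2 : 'M[R]_(m, dimC X + m + m) := row_mx (row_mx 0 1%:M) 0.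
pose p : 'M[R]_(dimC X + m + m) := block_mx 0 0 (row_mx 0 1%:M) 0.
exists (Smx f1 0 0 0 1%:M), (Smx f2 0 0 k2 1%:M); split.
- apply/is_Smorph_SmxP; split; last by split; rewrite /f1 /=; homog_solve.
  split=> /=; rewrite /f1; blk_simp => //.
  by congr col_mx; [rewrite subrr | apply: (eq_by_rel ad); mx_lin].
- apply/is_Smorph_SmxP; split; last by split; rewrite /f2 /k2 /=; homog_solve.
  by split=> /=; rewrite /f2 /k2; blk_simp; rewrite ?addNr.
- rewrite Smx_mul [X in Shomotopic _ X]Smx1 /f1 /f2 /k2; blk_simp.
  exact: Shomotopic_refl.
- apply: (Shomotopic_Smx_odd (X := susp (desusp X)) (Y := susp (desusp X)) p 0 0 0 0).
  1-5: by rewrite /p /=; homog_solve.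
  rewrite Smx_odd_boundary Smx_mul [in RHS](Smx1 (dimC (susp (desusp X)))) Smx_opp Smx_add.
  rewrite /f1 /f2 /k2 /=; congr Smx; blk_simp => //; last by rewrite subrr.
  by rewrite !scalar_mx_block; blk_simp; rewrite addNr subrr.
Qed.

Lemma Sequiv_desusp_susp (X : Sc) : is_Scx X -> Sequiv X (desusp (susp X)).
Proof.
case/is_ScxP=> [[_ _ db _ _] [? ? ? ? ?]].
pose f1 : 'M[R]_(dimC X + m + m, dimC X) := col_mx (col_mx 1%:M 0) 0.
pose h1 : 'M[R]_(dimC X + m + m, m) := col_mx (col_mx 0 1%:M) 0.
pose f2 : 'M[R]_(dimC X, dimC X + m + m) := row_mx (row_mx 1%:M 0) (de2 X).
pose p : 'M[R]_(dimC X + m + m) := block_mx 0 (col_mx 0 (- 1%:M)) 0 0.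
exists (Smx f1 0 h1 0 1%:M), (Smx f2 0 0 0 1%:M); split.
- apply/is_Smorph_SmxP; split; last by split; rewrite /f1 /h1 /=; homog_solve.
  by split=> /=; rewrite /f1 /h1; blk_simp; rewrite ?addNr.
- apply/is_Smorph_SmxP; split; last by split; rewrite /f2 /=; homog_solve.
  split=> /=; rewrite /f2; blk_simp => //.
  by rewrite addNr; congr row_mx; apply: (eq_by_rel db); mx_lin.
- rewrite Smx_mul [X in Shomotopic _ X]Smx1 /f1 /f2 /h1; blk_simp.
  exact: Shomotopic_refl.
- apply: (Shomotopic_Smx_odd (X := desusp (susp X)) (Y := desusp (susp X)) p 0 0 0 0).
  1-5: by rewrite /p /=; homog_solve.
  rewrite Smx_odd_boundary Smx_mul [in RHS](Smx1 (dimC (desusp (susp X)))) Smx_opp Smx_add.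
  rewrite /f1 /f2 /h1 /=; congr Smx; blk_simp => //; last by rewrite subrr.
  by rewrite !scalar_mx_block; blk_simp; rewrite !subrr.
Qed.

End SuspensionInverses.

Section IteratedSuspension.
Context {R : comPzRingType} {m : nat} {rd : 'I_m -> int}.
Local Notation Sc := (@Scx R m rd).

Lemma suspn_Scx z {X : Sc} : is_Scx X -> is_Scx (suspn z X).
Proof.
move=> sX; case: z => k /=.
  by elim: k => //= k IH; apply: susp_Scx.
by elim: k => [|k IH]; apply: desusp_Scx.
Qed.

Lemma susp_suspn z (X : Sc) : is_Scx X -> Sequiv (susp (suspn z X)) (suspn (z + 1) X).
Proof.
move=> sX; case: z => [k|[|k]].
- by rewrite -PoszD addn1; apply: Sequiv_refl.
- exact/Sequiv_sym/Sequiv_susp_desusp.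
- rewrite (_ : Negz k.+1 + 1 = Negz k); last by rewrite !NegzE; lia.
  exact/Sequiv_sym/Sequiv_susp_desusp/(suspn_Scx (Negz k)).
Qed.

Lemma desusp_suspn z (X : Sc) : is_Scx X -> Sequiv (desusp (suspn z X)) (suspn (z - 1) X).
Proof.
move=> sX; case: z => [[|k]|k].
- exact: Sequiv_refl.
- rewrite (_ : k.+1%:Z - 1 = k); last by lia.
  exact/Sequiv_sym/Sequiv_desusp_susp/(suspn_Scx k).
- rewrite (_ : Negz k - 1 = Negz k.+1); last by rewrite !NegzE; lia.
  exact: Sequiv_refl.
Qed.
End IteratedSuspension.

Theorem corollary2p8 (R : comPzRingType) (m : nat) (rd : 'I_m -> int)
  (X : @Scx R m rd) (hX : is_Scx X) (i j : int) :
  Sequiv (suspn i (suspn j X)) (suspn (i + j) X).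
Proof.
have sY := suspn_Scx j hX.
case: i => k.
- elim: k => [|k IH]; first by rewrite add0r; apply: Sequiv_refl.
  apply: Sequiv_trans (susp_Sequiv (suspn_Scx k sY) (suspn_Scx _ hX) IH) _.
  by rewrite -addn1 PoszD addrAC; apply: susp_suspn.
- elim: k => [|k IH].
    by rewrite (_ : Negz 0 + j = j - 1); [apply: desusp_suspn | rewrite NegzE; lia].
  apply: Sequiv_trans (desusp_Sequiv (suspn_Scx (Negz k) sY) (suspn_Scx _ hX) IH) _.
  rewrite (_ : Negz k.+1 + j = Negz k + j - 1); last by rewrite !NegzE; lia.
  exact: desusp_suspn.
Qed.
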